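(* Let $M$ be a Puiseux monoid and let $R$ be an integral domain. Suppose $f = \alpha_n X^{q_n} + \dots + \alpha_1 X^{q_1} + \alpha_0 \in R[M]$ is written in canonical form (so $q_n > \dots > q_1 > 0$ and all $\alpha_j \neq 0$). If there is a prime ideal $P$ of $R$ such that $\alpha_n \notin P$, $\alpha_j \in P$ for all $0 \le j < n$, and $\alpha_0 \notin P^2$, then $f$ cannot be written as a product $gh$ with $g,h \in R[M]\setminus R$.
   Context: A Puiseux monoid is an additive submonoid of $(\mathbb{Q}_{\ge 0},+)$. For a commutative ring $R$ and a Puiseux monoid $M$, $R[M]$ denotes the semigroup ring of $M$ over $R$ (finite formal sums $\sum_{s\in M} f(s)X^s$ with $X^sX^t=X^{s+t}$). A canonical form of a nonzero element is a representation $\sum_i \alpha_iX^{q_i}$ with all coefficients nonzero and pairwise distinct exponents listed in decreasing order. *)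

From HB Require Import structures.
From mathcomp Require Import all_boot all_order all_algebra.
From mathcomp Require Import ring_quotient.
Set Implicit Arguments. Unset Strict Implicit. Unset Printing Implicit Defensive.
Import Order.TTheory GRing.Theory Num.Theory.
Local Open Scope ring_scope.

Definition puiseux_monoid (M : {pred rat}) : Prop :=
  [/\ 0 \in M,
      (forall a b, a \in M -> b \in M -> a + b \in M) &
      (forall a, a \in M -> 0 <= a)].

(* Elements of the semigroup ring R[M] are represented as finite formal sums
   sum_i c_i X^{e_i}, given as a list of (coefficient, exponent) pairs with all
   exponents in M.  Two formal sums denote the same element iff they have the
   same coefficient function. *)
Definition fsum (R : nzRingType) := seq (R * rat).

Definition coef (R : nzRingType) (f : fsum R) (q : rat) : R :=
  \sum_(x <- f | x.2 == q) x.1.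

Definition in_semiring (R : nzRingType) (M : {pred rat}) (f : fsum R) : Prop :=
  all (fun x => x.2 \in M) f.

Definition fmul (R : nzRingType) (g h : fsum R) : fsum R :=
  [seq (a.1 * b.1, a.2 + b.2) | a <- g, b <- h].

Definition feq (R : nzRingType) (f g : fsum R) : Prop :=
  forall q, coef f q = coef g q.

Definition is_const (R : nzRingType) (g : fsum R) : Prop :=
  forall q, q != 0 -> coef g q = 0.

Definition in_ideal_sq (R : nzRingType) (P : {pred R}) (a : R) : Prop :=
  exists s : seq (R * R),
    all (fun x => (x.1 \in P) && (x.2 \in P)) s /\ a = \sum_(x <- s) x.1 * x.2.

Definition canon_sum (R : nzRingType) (n : nat) (alpha : nat -> R) (q : nat -> rat)
  : fsum R := [seq (alpha j, q j) | j <- iota 0 n.+1].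

From HB Require Import structures.
From mathcomp Require Import all_boot all_order all_algebra.
From mathcomp Require Import ring_quotient.
From mathcomp Require Import ring lra.
Set Implicit Arguments.
Unset Strict Implicit.
Unset Printing Implicit Defensive.

Import Order.TTheory GRing.Theory Num.Theory.
Local Open Scope ring_scope.

(* Let s and t be the lowest exponents at which g and h have a coefficient
   outside the prime P.  Then the coefficient of gh at s + t lies outside P,
   as in Gauss' lemma; the same argument with the zero ideal and the highest
   exponents shows deg(gh) = deg g + deg h.  Modulo P, f is alpha_n X^{q_n},
   so s + t = q_n = deg g + deg h.  If the constant term of g were outside P,
   then s = 0 and t = deg g + deg h <= deg h, so deg g = 0 and g would be a
   constant, exponents being nonnegative.  Hence both constant terms lie in P
   and alpha_0 = g_0 h_0 lies in P^2. *)

Definition lt_dir (dir : bool) (a b : rat) := if dir then a < b else b < a.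

Lemma lt_dir_irr dir : irreflexive (lt_dir dir).
Proof. by case: dir => a; rewrite /lt_dir ltxx. Qed.

Lemma lt_dir_trans dir : transitive (lt_dir dir).
Proof. by case: dir => b a c; rewrite /lt_dir => ? ?; lra. Qed.

Lemma lt_dir_total dir a b : a != b -> ~~ lt_dir dir a b -> lt_dir dir b a.
Proof.
rewrite /lt_dir => ab; case: dir; rewrite -leNgt le_eqVlt ?(negPf ab) //.
by rewrite eq_sym (negPf ab).
Qed.

Lemma exists_minimal (T : eqType) (lt : rel T) (s : seq T) :
  irreflexive lt -> transitive lt -> s != [::] ->
  exists2 m, m \in s & forall a, a \in s -> ~~ lt a m.
Proof.
move=> lt_irr lt_trans; elim: s => // x s IHs _.
have [->|/IHs [m ms m_min]] := eqVneq s [::].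
  by exists x => [|a]; rewrite ?mem_head // inE => /eqP ->; rewrite lt_irr.
have [xm|mx] := boolP (lt x m).
  exists x => [|a]; first exact: mem_head.
  rewrite inE => /predU1P [->|aS]; first by rewrite lt_irr.
  by apply: contra (m_min a aS) => /lt_trans; apply.
exists m => [|a]; first by rewrite inE ms orbT.
by rewrite inE => /predU1P [->|/m_min].
Qed.

Section FormalSumCoef.
Variable R : comNzRingType.
Implicit Types (g h : fsum R) (u : rat).

Lemma coef_nz_exponent g u : coef g u != 0 -> u \in map snd g.
Proof.
apply: contraR => ug; rewrite /coef big_seq_cond big1 // => x /andP[xg /eqP xu].
by move: ug; rewrite -xu map_f.
Qed.

Lemma coef_fmul g h u :
  coef (fmul g h) u = \sum_(x <- g) \sum_(y <- h | x.2 + y.2 == u) x.1 * y.1.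
Proof.
rewrite /coef /fmul big_mkcond big_allpairs_dep /=.
by apply: eq_bigr => x _; rewrite [RHS]big_mkcond.
Qed.

Lemma coef_fmulC g h u : coef (fmul g h) u = coef (fmul h g) u.
Proof.
rewrite !coef_fmul; under eq_bigr do rewrite big_mkcond.
under [RHS]eq_bigr do rewrite big_mkcond.
rewrite exchange_big; apply: eq_bigr => y _; apply: eq_bigr => x _.
by rewrite addrC mulrC.
Qed.

Lemma coef_fmul_expand (E : seq rat) g h u :
  uniq E -> {subset map snd g <= E} ->
  coef (fmul g h) u = \sum_(a <- E) coef g a * coef h (u - a).
Proof.
move=> E_uniq gE; rewrite coef_fmul.
transitivity (\sum_(x <- g) \sum_(a <- E | a == x.2) x.1 * coef h (u - a)).
  apply: eq_big_seq => x xg; rewrite -[RHS]big_filter.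
  have -> : [seq a <- E | a == x.2] = [:: x.2].
    by apply: filter_pred1_uniq => //; apply: gE; rewrite map_f.
  rewrite big_seq1 /coef mulr_sumr.
  by apply: eq_bigl => y; apply/eqP/eqP => ?; lra.
under eq_bigr do rewrite big_mkcond.
rewrite exchange_big /=; apply: eq_bigr => a _.
rewrite /coef mulr_suml [RHS]big_mkcond; apply: eq_bigr => x _.
by rewrite eq_sym; case: eqP => // ->.
Qed.

Lemma exists_extremal_coef_notin dir (Q : {pred R}) g :
  0 \in Q -> (exists u, coef g u \notin Q) ->
  exists s, coef g s \notin Q /\ forall a, lt_dir dir a s -> coef g a \in Q.
Proof.
move=> Q0 [u gu]; set E := [seq a <- map snd g | coef g a \notin Q].
have memE a : coef g a \notin Q -> a \in E.
  move=> ga; rewrite mem_filter ga coef_nz_exponent //.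
  by apply: contraNneq ga => ->.
have [|s sE s_min] := @exists_minimal _ _ E (lt_dir_irr dir) (@lt_dir_trans dir).
  by apply: contraTneq (memE u gu) => ->.
move: sE; rewrite mem_filter => /andP[gs _]; exists s; split => // a aS.
by apply: contraTT aS => /memE /s_min.
Qed.

Section PrimeIdeal.
Variables (Q : {pred R}).
Hypotheses (Q_ideal : idealr_closed Q) (Q_prime : prime_idealr_closed Q).

Lemma ideal_mull a b : b \in Q -> a * b \in Q.
Proof. by case: Q_ideal => Q0 _ QM bQ; rewrite -[_ * _]addr0 QM. Qed.

Lemma ideal_mulr a b : a \in Q -> a * b \in Q.
Proof. by rewrite mulrC; apply: ideal_mull. Qed.

Lemma ideal_add a b : a \in Q -> b \in Q -> a + b \in Q.
Proof. by case: Q_ideal => _ _ QM aQ bQ; rewrite -[a]mul1r QM. Qed.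

Lemma ideal_sum (I : Type) (r : seq I) (p : pred I) (F : I -> R) :
  (forall i, p i -> F i \in Q) -> \sum_(i <- r | p i) F i \in Q.
Proof.
case: Q_ideal => Q0 _ _ FQ.
by apply: (big_ind (fun x => x \in Q)) => //; apply: ideal_add.
Qed.

Lemma ideal_sum_notin (I : Type) (r : seq I) (F : I -> R) :
  \sum_(i <- r) F i \notin Q -> exists i, F i \notin Q.
Proof.
elim: r => [|i r IHr]; first by case: Q_ideal => Q0 _ _; rewrite big_nil Q0.
rewrite big_cons; have [FiQ|] := boolP (F i \in Q); last by exists i.
by move=> sumQ; apply: IHr; apply: contra sumQ; apply: ideal_add.
Qed.

Lemma ideal_add_notin a b : a \notin Q -> b \in Q -> a + b \notin Q.
Proof.
case: Q_ideal => _ _ QM aQ bQ; apply: contra aQ => abQ.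
by rewrite -[a](addrK b) -mulN1r addrC QM.
Qed.

Lemma prime_ideal_mul_notin a b : a \notin Q -> b \notin Q -> a * b \notin Q.
Proof. by move=> aQ bQ; apply/negP => /Q_prime; rewrite (negPf aQ) (negPf bQ). Qed.

Lemma coef_fmul_extremal_notin dir g h s t :
  coef g s \notin Q -> coef h t \notin Q ->
  (forall a, lt_dir dir a s -> coef g a \in Q) ->
  (forall b, lt_dir dir b t -> coef h b \in Q) ->
  coef (fmul g h) (s + t) \notin Q.
Proof.
move=> gs ht g_min h_min.
have E_uniq := undup_uniq (s :: map snd g).
rewrite (coef_fmul_expand h _ E_uniq); last by move=> a ag; rewrite mem_undup inE ag orbT.
rewrite (bigD1_seq s) ?mem_undup ?mem_head //= (addrC s) addrK.
apply: ideal_add_notin; first exact: prime_ideal_mul_notin.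
apply: ideal_sum => a a_neq_s; have [/g_min ga|a_not_before] := boolP (lt_dir dir a s).
  exact: ideal_mulr.
apply: ideal_mull; apply: h_min.
move: (lt_dir_total a_neq_s a_not_before); rewrite /lt_dir; case: (dir) => ?; lra.
Qed.

Lemma exists_coef_fmul_notin dir g h a b :
  coef g a \notin Q -> coef h b \notin Q ->
  exists2 c, ~~ lt_dir dir (a + b) c & coef (fmul g h) c \notin Q.
Proof.
have Q0 : 0 \in Q by case: Q_ideal.
move=> ga hb.
have [s [gs g_min]] := exists_extremal_coef_notin dir Q0 (ex_intro _ a ga).
have [t [ht h_min]] := exists_extremal_coef_notin dir Q0 (ex_intro _ b hb).
exists (s + t); last exact: (coef_fmul_extremal_notin gs ht g_min h_min).
move: (contraNN (g_min a) ga) (contraNN (h_min b) hb).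
by rewrite /lt_dir; case: (dir); rewrite -!leNgt => ? ?; lra.
Qed.

End PrimeIdeal.
End FormalSumCoef.

Lemma idealr_closed0 (R : idomainType) : idealr_closed [pred x : R | x == 0].
Proof.
split; rewrite ?inE ?oner_eq0 // => a u v.
by rewrite !inE => /eqP -> /eqP ->; rewrite mulr0 addr0.
Qed.

Lemma prime_idealr_closed0 (R : idomainType) : prime_idealr_closed [pred x : R | x == 0].
Proof. by move=> u v; rewrite !inE mulf_eq0. Qed.

Section NonnegExponents.
Variables (R : idomainType) (M : {pred rat}).
Hypothesis M_ge0 : forall a, a \in M -> 0 <= a.
Implicit Types f g h : fsum R.

Lemma coef_nz_ge0 g a : in_semiring M g -> coef g a != 0 -> 0 <= a.
Proof. by move=> gM /coef_nz_exponent /mapP [x xg ->]; apply/M_ge0/(allP gM). Qed.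

Lemma coef_fmul0 g h :
  in_semiring M g -> in_semiring M h -> coef (fmul g h) 0 = coef g 0 * coef h 0.
Proof.
move=> gM hM; have E_uniq := undup_uniq (0 :: map snd g).
rewrite (coef_fmul_expand h 0 E_uniq); last by move=> a ag; rewrite mem_undup inE ag orbT.
rewrite (bigD1_seq 0) ?mem_undup ?mem_head //= subr0 big1 ?addr0 // => a a_nz.
have [->|/(coef_nz_ge0 gM) a_ge0] := eqVneq (coef g a) 0; first by rewrite mul0r.
have a_gt0 : 0 < a by rewrite lt_neqAle eq_sym a_nz.
have [->|/(coef_nz_ge0 hM) ?] := eqVneq (coef h (0 - a)) 0; first by rewrite mulr0.
exfalso; lra.
Qed.

Lemma exists_coef_notin_fmulr (Q : {pred R}) f g h u :
  idealr_closed Q -> feq f (fmul g h) -> coef f u \notin Q ->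
  exists b, coef h b \notin Q.
Proof.
move=> Q_ideal fgh; have E_uniq := undup_uniq (map snd g).
rewrite fgh (coef_fmul_expand h u E_uniq); last by move=> a; rewrite mem_undup.
move=> /(ideal_sum_notin Q_ideal) [a gh_a]; exists (u - a).
by apply: contra gh_a => /(ideal_mull Q_ideal).
Qed.

Lemma coef0_in_prime_factor (Q : {pred R}) f g h qn :
  idealr_closed Q -> prime_idealr_closed Q ->
  in_semiring M g -> ~ is_const g -> feq f (fmul g h) ->
  (forall u, coef f u \notin Q -> u = qn) -> coef f qn \notin Q ->
  (forall u, coef f u != 0 -> u <= qn) ->
  coef g 0 \in Q.
Proof.
move=> Q_ideal Q_prime gM g_nconst fgh f_notin fqn f_le.
have [b hb] := exists_coef_notin_fmulr Q_ideal fgh fqn.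
apply/negPn/negP => g0; apply: g_nconst => a a_nz; apply/eqP/negPn/negP => ga.
have a_gt0 : 0 < a by rewrite lt_neqAle eq_sym a_nz (coef_nz_ge0 gM).
have hb0 : coef h b \notin [pred x : R | x == 0].
  by rewrite inE; apply: contraNneq hb => ->; case: Q_ideal.
have [c] := exists_coef_fmul_notin Q_ideal Q_prime true g0 hb.
rewrite -fgh => c_le /f_notin c_qn.
have [d] := exists_coef_fmul_notin (@idealr_closed0 R) (@prime_idealr_closed0 R) false ga hb0.
rewrite inE -fgh => d_ge /f_le d_le.
by move: c_le d_ge; rewrite /lt_dir -!leNgt => ? ?; lra.
Qed.

End NonnegExponents.

Section CanonicalSum.
Variables (R : nzRingType) (n : nat) (alpha : nat -> R) (q : nat -> rat).
Local Notation f := (canon_sum n alpha q).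

Lemma coef_canon_sum u : coef f u = \sum_(j <- iota 0 n.+1 | q j == u) alpha j.
Proof. by rewrite /coef /canon_sum big_map. Qed.

Lemma coef_canon_sum_nz u : coef f u != 0 -> exists2 j, (j <= n)%N & u = q j.
Proof.
rewrite coef_canon_sum.
have [/hasP [j]|/hasPn none] := boolP (has (fun j => q j == u) (iota 0 n.+1)).
  by rewrite mem_iota ltnS => /andP[_ jn] /eqP <-; exists j.
by rewrite big_seq_cond big1 ?eqxx // => j /andP[ji qj]; move: (none j ji); rewrite qj.
Qed.

Hypothesis q_lt : forall j, (j < n)%N -> q j < q j.+1.

Lemma canon_exponent_lt : {in [pred j | (j <= n)%N] &, {homo q : i j / (i < j)%N >-> i < j}}.
Proof.
apply: homo_ltn_in => [y x z|i j _|i]; first exact: lt_trans.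
  by rewrite !inE => jn k /andP[_ /ltnW kj]; apply: leq_trans kj jn.
by rewrite !inE => _ /q_lt.
Qed.

Lemma canon_exponent_le j : (j <= n)%N -> q j <= q n.
Proof.
rewrite leq_eqVlt => /predU1P [->//|jn].
by apply/ltW/canon_exponent_lt; rewrite ?inE //; apply: ltnW.
Qed.

Lemma canon_exponent_inj : {in [pred j | (j <= n)%N] &, injective q}.
Proof.
move=> i j iD jD qij; apply/eqP; have [ij|ji|//] := ltngtP i j.
  by have := canon_exponent_lt iD jD ij; rewrite qij ltxx.
by have := canon_exponent_lt jD iD ji; rewrite qij ltxx.
Qed.

Lemma coef_canon_sum_exponent j : (j <= n)%N -> coef f (q j) = alpha j.
Proof.
move=> jn; rewrite coef_canon_sum -big_filter.
have -> : [seq i <- iota 0 n.+1 | q i == q j] = [:: j].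
  rewrite -[RHS](filter_pred1_uniq (iota_uniq 0 n.+1)) ?mem_iota //.
  apply: eq_in_filter => i; rewrite mem_iota ltnS => /andP[_ i_le].
  by apply/eqP/eqP => [/canon_exponent_inj -> //|->].
by rewrite big_seq1.
Qed.

Lemma coef_canon_sum_le u : coef f u != 0 -> u <= q n.
Proof. by case/coef_canon_sum_nz => j jn ->; apply: canon_exponent_le. Qed.

Lemma coef_canon_sum_notin (P : {pred R}) :
  0 \in P -> (forall j, (j < n)%N -> alpha j \in P) ->
  forall u, coef f u \notin P -> u = q n.
Proof.
move=> P0 alpha_in u fu; have /coef_canon_sum_nz [j jn uj] : coef f u != 0.
  by apply: contraNneq fu => ->.
move: jn fu; rewrite uj leq_eqVlt => /predU1P [-> //|jn].
by rewrite coef_canon_sum_exponent ?(ltnW jn) // alpha_in.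
Qed.

End CanonicalSum.

Theorem mainTheorem3 (M : {pred rat}) (R : idomainType)
  (n : nat) (alpha : nat -> R) (q : nat -> rat) (P : {pred R}) :
  puiseux_monoid M ->
  (0 < n)%N ->
  q 0%N = 0 ->
  (forall j, (j < n)%N -> q j < q j.+1) ->
  (forall j, (j <= n)%N -> q j \in M) ->
  (forall j, (j <= n)%N -> alpha j != 0) ->
  idealr_closed P -> prime_idealr_closed P ->
  alpha n \notin P ->
  (forall j, (j < n)%N -> alpha j \in P) ->
  ~ in_ideal_sq P (alpha 0%N) ->
  ~ (exists g h : fsum R,
       [/\ in_semiring M g, in_semiring M h,
           ~ is_const g, ~ is_const h &
           feq (canon_sum n alpha q) (fmul g h)]).
Proof.
move=> [_ _ M_ge0] _ q0 q_lt _ _ P_ideal P_prime alpha_n_notin alpha_in a0_not_sq.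
case=> g [h [gM hM g_nconst h_nconst fgh]].
have P0 : 0 \in P by case: P_ideal.
have f_notin := coef_canon_sum_notin q_lt P0 alpha_in.
have f_top : coef (canon_sum n alpha q) (q n) \notin P.
  by rewrite coef_canon_sum_exponent.
have f_le := @coef_canon_sum_le _ _ alpha _ q_lt.
have hgf : feq (canon_sum n alpha q) (fmul h g) by move=> u; rewrite fgh coef_fmulC.
have g0 := coef0_in_prime_factor M_ge0 P_ideal P_prime gM g_nconst fgh f_notin f_top f_le.
have h0 := coef0_in_prime_factor M_ge0 P_ideal P_prime hM h_nconst hgf f_notin f_top f_le.
apply: a0_not_sq; exists [:: (coef g 0, coef h 0)]; rewrite /= g0 h0 big_seq1; split => //.
by rewrite -(coef_canon_sum_exponent alpha q_lt (leq0n n)) q0 fgh (coef_fmul0 M_ge0).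
Qed.
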